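(* Let $\mathcal{D}$ be a DAG on vertex set $[p]$, let $\mathcal{V} \subseteq [p]$, and let $k \in \mathcal{V}$. If $F_{\mathcal{D}}(\mathcal{V}, k) > 0$, then $k \notin \mathrm{Maximal}(\mathcal{D}, \mathcal{V})$; equivalently, if no (proper) descendant of $k$ in $\mathcal{D}$ lies in $\mathcal{V}$, then $F_{\mathcal{D}}(\mathcal{V}, k) = 0$.
   Context: For a DAG $\mathcal{D}$ on $[p]$ and $i, j \in [p]$, $S \subseteq [p]\setminus\{i,j\}$, write $i \not\perp\!\!\!\perp_{\mathcal{D}} j \mid S$ if $i$ and $j$ are d-connected given $S$ in $\mathcal{D}$. For $\mathcal{V} \subseteq [p]$, the moral subgraph $\mathcal{M}_{\mathcal{V}}(\mathcal{D})$ is the undirected graph with vertex set $\mathcal{V}$ and edge set $\{ i - j : i \neq j \in \mathcal{V},\ i \not\perp\!\!\!\perp_{\mathcal{D}} j \mid \mathcal{V}\setminus\{i,j\}\}$. $\mathcal{G}[W]$ denotes the induced subgraph of an undirected graph $\mathcal{G}$ on $W$, and $\mathcal{V}\setminus k := \mathcal{V}\setminus\{k\}$. The fill edge set is $\mathcal{F}_{\mathcal{D}}(\mathcal{V}, k) = \mathcal{M}_{\mathcal{V}\setminus k}(\mathcal{D}) \setminus \mathcal{M}_{\mathcal{V}}(\mathcal{D})[\mathcal{V}\setminus k]$ and the fill score is $F_{\mathcal{D}}(\mathcal{V}, k) = |\mathcal{F}_{\mathcal{D}}(\mathcal{V}, k)|$. With $\mathrm{de}_{\mathcal{D}}(v)$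 the set of descendants of $v$ in $\mathcal{D}$ (nodes reachable from $v$ by a nonempty directed path, excluding $v$ itself), $\mathrm{Maximal}(\mathcal{D}, \mathcal{V}) := \{ v \in \mathcal{V} : \mathrm{de}_{\mathcal{D}}(v) \cap \mathcal{V} = \emptyset \}$. *)

From mathcomp Require Import all_boot.
From mathcomp Require Import boolp.
Set Implicit Arguments. Unset Strict Implicit. Unset Printing Implicit Defensive.

Section DAG.
Variable p : nat.
Implicit Types (D : rel 'I_p) (S V : {set 'I_p}) (i j k v w : 'I_p).

(* D x y means there is a directed edge x -> y. *)
Definition acyclic D : Prop := forall v, ~~ [exists w, D v w && connect D w v].

Definition desc D v : {set 'I_p} := [set w | [exists u, D v u && connect D u w]].

Definition adj D : rel 'I_p := fun x y => D x y || D y x.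

Definition collider D a b c : bool := D a b && D c b.

Definition anc_or_in D S b : bool := [exists s in S, connect D b s].

Definition dconn D i j S : Prop :=
  exists s : seq 'I_p,
    let q := i :: s in
    [/\ last i s = j, uniq q, path (adj D) i s &
      forall n, 0 < n < size s ->
        let a := nth i q n.-1 in let b := nth i q n in let c := nth i q n.+1 in
        (collider D a b c -> anc_or_in D S b) /\
        (~~ collider D a b c -> b \notin S)].

Definition moral_edge D V i j : bool :=
  [&& i != j, i \in V, j \in V & `[< dconn D i j (V :\ i :\ j) >]].

(* fill edge set F_D(V,k) = M_{V\k}(D) \ M_V(D)[V\k], as a set of
   unordered pairs {i,j} *)
Definition fill_edges D V k : {set {set 'I_p}} :=
  [set e : {set 'I_p} | [exists i, exists j,
      (e == [set i; j]) && moral_edge D (V :\ k) i j && ~~ moral_edge D V i j]].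

Definition fill_score D V k : nat := #|fill_edges D V k|.

Definition Maximal D V : {set 'I_p} := [set v in V | [disjoint desc D v & V]].

End DAG.

From mathcomp Require Import all_boot.
From mathcomp Require Import boolp.
From Stdlib Require Import Lia.
From mathcomp Require Import zify.

Set Implicit Arguments.
Unset Strict Implicit.
Unset Printing Implicit Defensive.

(* Let k be maximal in V (no proper descendant of k lies in V), and let
   i, j in V \ k be d-connected given S \ k, where S = V \ {i, j}.  We show
   that the same path d-connects i and j given S, so every moral edge of
   M_{V\k}(D) is already an edge of M_V(D) and the fill set is empty.
   Colliders stay unblocked since their witnesses in S \ k lie in S; the
   only danger is k itself occurring as a non-collider.  Then some path
   edge leaves k, and following the path in that direction we keep walking
   along D-edges until we meet an endpoint or a collider (lemmas
   [forward_run] and [backward_run], stated for any relation on a finite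
   type).  Either way we reach a vertex of V \ k from k: the endpoints are
   in V, and an unblocked collider has a descendant in S \ k.  This
   contradicts maximality of k ([maximal_reach]). *)

Section Runs.
Variables (T : finType) (e : rel T) (f : nat -> T) (N : nat).

Hypothesis adj_f : forall m, m < N -> e (f m) (f m.+1) || e (f m.+1) (f m).

Lemma forward_run m0 : m0 < N -> e (f m0) (f m0.+1) ->
  exists2 m, m0 < m <= N &
    connect e (f m0) (f m) /\ (m = N \/ e (f m.-1) (f m) && e (f m.+1) (f m)).
Proof.
move Hd: (N - m0) => d; elim: d m0 Hd => [|d IH] m0 hd lt0 fw; first lia.
case: (eqVneq m0.+1 N) => [eN | nN].
  by exists m0.+1; [lia | split; [exact: connect1 | left]].
have lt1 : m0.+1 < N by lia.
case/orP: (adj_f lt1) => [fw1 | bw1].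
  have hd1 : N - m0.+1 = d by lia.
  have [m hm [reach stop]] := IH m0.+1 hd1 lt1 fw1.
  by exists m; [lia | split; [exact: connect_trans (connect1 fw) reach |]].
by exists m0.+1; [lia | split; [exact: connect1 | right; rewrite /= fw bw1]].
Qed.

End Runs.

Lemma backward_run (T : finType) (e : rel T) (f : nat -> T) (N n : nat) :
  (forall m, m < N -> e (f m) (f m.+1) || e (f m.+1) (f m)) ->
  0 < n <= N -> e (f n) (f n.-1) ->
  exists2 m, m < n &
    connect e (f n) (f m) /\ (m = 0 \/ e (f m.+1) (f m) && e (f m.-1) (f m)).
Proof.
move=> adj_f hn bw.
pose g m := f (n - m).
have adj_g : forall m, m < n -> e (g m) (g m.+1) || e (g m.+1) (g m).
  move=> m lt; rewrite /g (_ : n - m = (n - m.+1).+1); last lia.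
  by rewrite orbC; apply: adj_f; lia.
have fw : e (g 0) (g 1) by rewrite /g subn0 subn1.
have n_gt0 : 0 < n by case/andP: hn.
have [m hm [reach stop]] := forward_run adj_g n_gt0 fw.
exists (n - m); first lia.
rewrite /g subn0 in reach; split => //.
case: stop => [-> | col]; first by left; rewrite subnn.
have up : n - m.-1 = (n - m).+1 by lia.
have down : n - m.+1 = (n - m).-1 by lia.
by right; rewrite /g up down in col.
Qed.

Lemma anc_or_in_sub (p : nat) (D : rel 'I_p) (S S' : {set 'I_p}) (b : 'I_p) :
  S \subset S' -> anc_or_in D S b -> anc_or_in D S' b.
Proof.
move=> sub /existsP [s /andP [sS reach]].
by apply/existsP; exists s; rewrite (subsetP sub s sS).
Qed.

Lemma maximal_reach (p : nat) (D : rel 'I_p) (V : {set 'I_p}) (k w : 'I_p) :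
  k \in Maximal D V -> w \in V -> connect D k w -> w = k.
Proof.
rewrite inE => /andP [_ no_desc] wV /connectP [[|u q] /= walk last_w] //.
case/andP: walk => Dku walk.
have w_desc : w \in desc D k.
  by rewrite inE; apply/existsP; exists u; rewrite Dku; apply/connectP; exists q.
by rewrite (disjointFr no_desc w_desc) in wV.
Qed.

Section AddMaximal.
Variables (p : nat) (D : rel 'I_p) (V S : {set 'I_p}) (k i j : 'I_p).
Hypotheses (k_max : k \in Maximal D V) (S_V : S \subset V).
Hypotheses (iV : i \in V) (jV : j \in V) (i_k : i != k) (j_k : j != k).

Section OpenPath.
Variable q : seq 'I_p.
Let f n := nth i (i :: q) n.
Let N := size q.
Hypotheses (last_q : last i q = j) (path_q : path (adj D) i q).
Hypothesis open_collider : forall n, 0 < n < N ->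
  collider D (f n.-1) (f n) (f n.+1) -> anc_or_in D (S :\ k) (f n).

Lemma path_step m : m < N -> D (f m) (f m.+1) || D (f m.+1) (f m).
Proof. by move=> lt; move/(pathP i): path_q => /(_ m lt). Qed.

Lemma path_end : f N = j.
Proof. by rewrite -last_q -[last i q]/(last i (i :: q)) -nth_last. Qed.

Lemma endpoint_unreached m : m = 0 \/ m = N -> connect D k (f m) -> False.
Proof.
move=> hm reach.
have [fV fk] : f m \in V /\ f m != k by case: hm => ->; rewrite ?path_end.
by move: fk; rewrite (maximal_reach k_max fV reach) eqxx.
Qed.

Lemma collider_unreached m : 0 < m < N ->
  D (f m.-1) (f m) && D (f m.+1) (f m) -> connect D k (f m) -> False.
Proof.
move=> hm col reach.
have /existsP [s /andP [sS s_reach]] := open_collider hm col.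
move: sS; rewrite !inE => /andP [s_k sS].
have := maximal_reach k_max (subsetP S_V s sS) (connect_trans reach s_reach).
by move/eqP; rewrite (negPf s_k).
Qed.

Lemma no_forward_exit n : n < N -> f n = k -> D k (f n.+1) -> False.
Proof.
move=> lt fk out; rewrite -fk in out.
have [m hm [reach stop]] := forward_run path_step lt out.
rewrite fk in reach; have [mN | mN] := eqVneq m N.
  exact: endpoint_unreached (or_intror mN) reach.
case: stop => [mN' | col]; first by rewrite mN' eqxx in mN.
by apply: (collider_unreached (m := m)) => //; lia.
Qed.

Lemma no_backward_exit n : 0 < n <= N -> f n = k -> D k (f n.-1) -> False.
Proof.
move=> hn fk out; rewrite -fk in out.
have [m hm [reach stop]] := backward_run path_step hn out.
rewrite fk in reach; case: stop => [m0 | col].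
  exact: endpoint_unreached (or_introl m0) reach.
have [m0 | m_gt0] := posnP m; first exact: endpoint_unreached (or_introl m0) reach.
by apply: (collider_unreached (m := m)) => //; [lia | rewrite andbC].
Qed.

Lemma noncollider_neq n : 0 < n < N ->
  ~~ collider D (f n.-1) (f n) (f n.+1) -> f n != k.
Proof.
case/andP=> n_gt0 n_lt noncol; apply/eqP => fk.
case/orP: (path_step n_lt) => [out_next | in_next].
  by apply: (no_forward_exit n_lt fk); rewrite -fk.
have := path_step (leq_ltn_trans (leq_pred n) n_lt); rewrite prednK //.
case/orP => [in_prev | out_prev].
  by move: noncol; rewrite /collider in_prev in_next.
apply: (no_backward_exit (n := n) _ fk); first by rewrite n_gt0 ltnW.
by rewrite -fk.
Qed.

End OpenPath.

Lemma dconn_add_maximal : dconn D i j (S :\ k) -> dconn D i j S.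
Proof.
case=> q [last_q uniq_q path_q open_q].
have open_collider n hn := (open_q n hn).1.
exists q; split => // n hn /=.
have [open_col open_noncol] := open_q n hn.
split=> [col | noncol]; first exact: anc_or_in_sub (subsetDl S [set k]) (open_col col).
move: (open_noncol noncol); rewrite !inE.
by rewrite (noncollider_neq last_q path_q open_collider hn noncol).
Qed.

End AddMaximal.

Lemma moral_edge_add_maximal (p : nat) (D : rel 'I_p) (V : {set 'I_p})
    (k i j : 'I_p) :
  k \in Maximal D V -> moral_edge D (V :\ k) i j -> moral_edge D V i j.
Proof.
move=> k_max; rewrite /moral_edge !inE => /and4P [-> /andP [i_k iV]].
case/andP=> [j_k jV] /asboolP conn; rewrite iV jV; apply/asboolP.
have swap : V :\ k :\ i :\ j = (V :\ i :\ j) :\ k.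
  by apply/setP => x; rewrite !inE; case: (x != k); rewrite /= ?andbF.
rewrite swap in conn; apply: (dconn_add_maximal k_max) conn => //.
by apply/subsetP => x; rewrite !inE => /and3P [].
Qed.

Lemma fill_edges_maximal (p : nat) (D : rel 'I_p) (V : {set 'I_p}) (k : 'I_p) :
  k \in Maximal D V -> fill_edges D V k = set0.
Proof.
move=> k_max; apply/setP => e; rewrite !inE.
apply/existsP => -[i /existsP [j /andP [/andP [_ edge_Vk] no_edge_V]]].
by rewrite (moral_edge_add_maximal k_max edge_Vk) in no_edge_V.
Qed.

Theorem proposition3 (p : nat) (D : rel 'I_p) (V : {set 'I_p}) (k : 'I_p) :
  acyclic D -> k \in V -> 0 < fill_score D V k -> k \notin Maximal D V.
Proof.
move=> _ _; apply: contraTN => k_max.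
by rewrite /fill_score fill_edges_maximal // cards0.
Qed.
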